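(* Let $C_{\log}>0$, let $\gamma,\gamma'\in\mathbb{R}^d_{>0}$ with $\gamma'_i\ge\gamma_i$ for all $i\in[d]$, let $L,L'\in\mathbb{R}^d_{>0}$, and let $\psi:\mathbb{R}_{>0}\to\mathbb{R}$ be a twice differentiable convex function such that $\frac{\psi''(x)}{4}\le\psi''(z)\le4\psi''(x)$ for all $x>0$ and $z\in[x/2,2x]$. Define $\phi(p)=\sum_{i\in[d]}\gamma_i\psi(p_i)$, $\phi'(p)=\sum_{i\in[d]}\gamma'_i\psi(p_i)$, $\phi_L(p)=-C_{\log}\sum_{i\in[d]}\log p_i$, $F(p)=\langle p,L\rangle+\phi(p)+\phi_L(p)$ and $F'(p)=\langle p,L'\rangle+\phi'(p)+\phi_L(p)$. Let $\Omega\subseteq\mathbb{R}^d_{>0}$ be convex, and let $x=\arg\min_{p\in\Omega}F(p)$, $y=\arg\min_{p\in\Omega}F'(p)$. If $$C_{\log}\ge\max\Big\{9,\ 32\sum_{i\in[d]}(L'_i-L_i)^2x_i^2,\ 32\sum_{i\in[d]}(\gamma'_i-\gamma_i)^2\psi'(x_i)^2x_i^2\Big\},$$ then $\frac12x_i\le y_i\le2x_i$ for all $i\in[d]$. *)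

From HB Require Import structures.
From mathcomp Require Import all_boot all_order all_algebra.
From mathcomp Require Import all_classical all_reals all_analysis.
Set Implicit Arguments. Unset Strict Implicit. Unset Printing Implicit Defensive.
Import Order.TTheory GRing.Theory Num.Theory.
Local Open Scope ring_scope.

Definition inner (R : realType) (d : nat) (p L : 'I_d -> R) : R :=
  \sum_(i < d) p i * L i.

Definition phi_reg (R : realType) (d : nat) (gam : 'I_d -> R) (psi : R -> R)
  (p : 'I_d -> R) : R := \sum_(i < d) gam i * psi (p i).

Definition phi_log (R : realType) (d : nat) (Clog : R) (p : 'I_d -> R) : R :=
  - (Clog * \sum_(i < d) ln (p i)).

Definition Fobj (R : realType) (d : nat) (Clog : R) (gam L : 'I_d -> R)
  (psi : R -> R) (p : 'I_d -> R) : R :=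
  inner p L + phi_reg gam psi p + phi_log Clog p.

Definition is_argmin (R : realType) (d : nat) (G : ('I_d -> R) -> R)
  (Omega : set ('I_d -> R)) (x : 'I_d -> R) : Prop :=
  Omega x /\ forall p, Omega p -> G x <= G p.

Definition convex_set_d (R : realType) (d : nat) (Omega : set ('I_d -> R)) : Prop :=
  forall p q (t : R), Omega p -> Omega q -> 0 <= t <= 1 ->
    Omega (fun i => t * p i + (1 - t) * q i).

Definition convex_pos (R : realType) (psi : R -> R) : Prop :=
  forall a b (t : R), 0 < a -> 0 < b -> 0 <= t <= 1 ->
    psi (t * a + (1 - t) * b) <= t * psi a + (1 - t) * psi b.

Definition twice_diff_pos (R : realType) (psi : R -> R) : Prop :=
  forall z : R, 0 < z -> derivable psi z 1 /\ derivable (derive1 psi) z 1.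

From HB Require Import structures.
From mathcomp Require Import all_boot all_order all_algebra.
From mathcomp Require Import all_classical all_reals all_analysis.
From mathcomp Require Import ring lra.
Set Implicit Arguments. Unset Strict Implicit. Unset Printing Implicit Defensive.
Import Order.TTheory GRing.Theory Num.Theory.
Import numFieldNormedType.Exports.
Local Open Scope ring_scope.

(* Both minimisers satisfy the first-order optimality condition along the
   segment joining them: <grad F(x), y - x> >= 0 and <grad F'(y), x - y> >= 0.
   In the sum of the two, the term gam'_i (psi'(y_i) - psi'(x_i)) (y_i - x_i)
   is nonnegative by convexity of psi, and the log barrier contributes
   -C_log S with S = sum_i t_i, t_i = (y_i - x_i)^2 / (x_i y_i); what is left
   is sum_i a_i v_i with a_i = ((L'_i - L_i) + (gam'_i - gam_i) psi'(x_i)) x_i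
   and v_i = (x_i - y_i) / x_i. Since sum_i a_i^2 <= C_log / 8 and
   v_i^2 <= 2 t_i + 4 t_i^2, a weighted AM-GM inequality forces S <= 1/4,
   and a single t_i <= 1/4 already gives x_i / 2 <= y_i <= 2 x_i. *)

Section Inequalities.
Variable R : realFieldType.

Lemma first_order_pair_le (x y c g g' l l' dx dy : R) :
  0 < x -> 0 < y -> 0 <= g' -> 0 <= (dy - dx) * (y - x) ->
  (l + g * dx - c / x) * (y - x) + (l' + g' * dy - c / y) * (x - y)
  <= ((l' - l) * x + (g' - g) * dx * x) * ((x - y) / x) - c * ((y - x) ^+ 2 / (x * y)).
Proof.
move=> x0 y0 g'0 mono.
have -> : (l + g * dx - c / x) * (y - x) + (l' + g' * dy - c / y) * (x - y)
  = ((l' - l) * x + (g' - g) * dx * x) * ((x - y) / x) - c * ((y - x) ^+ 2 / (x * y))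
    - g' * ((dy - dx) * (y - x)).
  by field; rewrite !gt_eqF.
by rewrite lerBlDr lerDl mulr_ge0.
Qed.

Lemma rel_gap_sqr_le (x y : R) : 0 < x -> 0 < y ->
  ((x - y) / x) ^+ 2
  <= 2 * ((y - x) ^+ 2 / (x * y)) + 4 * ((y - x) ^+ 2 / (x * y)) ^+ 2.
Proof.
move=> x0 y0; set t := (y - x) ^+ 2 / (x * y).
have t0 : 0 <= t by rewrite divr_ge0 ?sqr_ge0 ?mulr_ge0 ?ltW.
have -> : ((x - y) / x) ^+ 2 = t * (y / x) by rewrite /t; field; rewrite !gt_eqF.
have ratio_le : y / x <= 2 + 4 * t.
  rewrite -subr_ge0.
  have -> : 2 + 4 * t - y / x = (3 * (y - x) ^+ 2 + x ^+ 2) / (x * y).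
    by rewrite /t; field; rewrite !gt_eqF.
  apply: divr_ge0; last exact/ltW/mulr_gt0.
  by rewrite addr_ge0 ?sqr_ge0 // mulr_ge0 ?sqr_ge0 ?ler0n.
have -> : 2 * t + 4 * t ^+ 2 = t * (2 + 4 * t) by ring.
exact: ler_wpM2l.
Qed.

Lemma near_of_gap_le_quarter (x y : R) : 0 < x -> 0 < y ->
  (y - x) ^+ 2 / (x * y) <= 1 / 4 -> x / 2 <= y <= 2 * x.
Proof.
move=> x0 y0; rewrite ler_pdivrMr ?mulr_gt0 // => gap.
by apply/andP; split; nra.
Qed.

End Inequalities.

Section Sums.
Variables (R : realDomainType) (I : finType).

Lemma ler_sum_term (f : I -> R) (j : I) : (forall i, 0 <= f i) -> f j <= \sum_i f i.
Proof. by move=> f0; rewrite (bigD1 j) //= lerDl sumr_ge0. Qed.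

Lemma sum_sqr_le_sqr_sum (f : I -> R) :
  (forall i, 0 <= f i) -> \sum_i f i ^+ 2 <= (\sum_i f i) ^+ 2.
Proof.
move=> f0; rewrite [leRHS]expr2 mulr_suml; apply: ler_sum => i _.
by rewrite expr2 ler_wpM2l // ler_sum_term.
Qed.

Lemma sum_sqrD_le (f g : I -> R) :
  \sum_i (f i + g i) ^+ 2 <= 2 * \sum_i f i ^+ 2 + 2 * \sum_i g i ^+ 2.
Proof.
rewrite !mulr_sumr -big_split; apply: ler_sum => i _.
rewrite -subr_ge0.
have -> : 2 * f i ^+ 2 + 2 * g i ^+ 2 - (f i + g i) ^+ 2 = (f i - g i) ^+ 2 by ring.
exact: sqr_ge0.
Qed.

Lemma sum_mul_le_sqr (k : R) (f g : I -> R) :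
  2 * k * \sum_i f i * g i <= k ^+ 2 * \sum_i f i ^+ 2 + \sum_i g i ^+ 2.
Proof.
rewrite !mulr_sumr -big_split; apply: ler_sum => i _.
rewrite -subr_ge0.
have -> : k ^+ 2 * f i ^+ 2 + g i ^+ 2 - 2 * k * (f i * g i) = (k * f i - g i) ^+ 2 by ring.
exact: sqr_ge0.
Qed.

End Sums.

Lemma gap_sum_le_quarter (R : realFieldType) (I : finType) (C : R) (a v t : I -> R) :
  9 <= C -> (forall i, 0 <= t i) -> (forall i, v i ^+ 2 <= 2 * t i + 4 * t i ^+ 2) ->
  \sum_i a i ^+ 2 <= C / 8 -> C * \sum_i t i <= \sum_i a i * v i ->
  \sum_i t i <= 1 / 4.
Proof.
move=> C9 t0 vt a_small; set S := \sum_i t i => coupling.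
have S0 : 0 <= S by apply: sumr_ge0.
have v_small : \sum_i v i ^+ 2 <= 2 * S + 4 * S ^+ 2.
  apply: le_trans (ler_sum _ (fun i _ => vt i)) _.
  by rewrite big_split /= -!mulr_sumr lerD2l ler_wpM2l // sum_sqr_le_sqr_sum.
have := sum_mul_le_sqr (8 * S) a v.
have := ler_wpM2l (mulr_ge0 (ler0n _ 16) S0) coupling.
have := ler_wpM2l (sqr_ge0 (8 * S)) a_small.
nra.
Qed.

Section FirstOrderOptimality.
Variable R : realType.
Local Open Scope classical_set_scope.

Lemma is_derive_ge0_at_right_min (f : R -> R) (D : R) :
  is_derive (0 : R) 1 f D -> (forall t, 0 < t <= 1 -> f 0 <= f t) -> 0 <= D.
Proof.
move=> [df <-] fmin.
have quotient_cvg : (fun h : R => h^-1 *: (f (h *: 1 + 0) - f 0)) @ 0^'+ --> 'D_1 f 0.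
  apply: cvg_trans df => P /= [e e0 He].
  by exists e => // h /= eh h0; apply: He => //; rewrite gt_eqF.
apply: (cvgr_to_ge quotient_cvg); near=> h.
have h0 : 0 < h by near: h; exact: nbhs_right_gt.
have h1 : h <= 1 by near: h; exact: nbhs_right_le.
rewrite /= scaler1 addr0 -[_ *: _]/(_ * _).
by rewrite mulr_ge0 ?invr_ge0 ?(ltW h0) // subr_ge0 fmin ?h0.
Unshelve. all: by end_near.
Qed.

Lemma is_derive_affine (a p : R) : is_derive (0 : R) 1 (fun t => t * a + p) a.
Proof.
have -> : (fun t => t * a + p) = a \*: id + cst p by apply/funext => t /=; rewrite mulrC.
by apply: is_derive_eq; rewrite ?scaler1 ?addr0.
Qed.

Lemma is_derive_comp_affine (f : R -> R) (p a D : R) :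
  is_derive p 1 f D -> is_derive (0 : R) 1 (fun t => f (t * a + p)) (D * a).
Proof.
by move=> fD; apply: is_derive1_comp (is_derive_affine a p); rewrite mul0r add0r.
Qed.

Lemma convex_pos_tangent (psi : R -> R) (a b : R) :
  convex_pos psi -> derivable psi a 1 -> 0 < a -> 0 < b ->
  derive1 psi a * (b - a) <= psi b - psi a.
Proof.
move=> cvx da a0 b0; rewrite -subr_ge0.
pose chord t := t * (psi b - psi a) + psi a.
pose graph t := psi (t * (b - a) + a).
have psiD : is_derive a 1 psi (derive1 psi a) by rewrite derive1E; exact: derivableP.
have gapD : is_derive (0 : R) 1 (chord - graph) (psi b - psi a - derive1 psi a * (b - a)).
  by apply: is_deriveB; [exact: is_derive_affine | exact: is_derive_comp_affine].
apply: (is_derive_ge0_at_right_min gapD).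
move=> t /andP[t0 t1]; rewrite /chord /graph !fctE /= !mul0r !add0r subrr subr_ge0.
have -> : t * (b - a) + a = t * b + (1 - t) * a by ring.
have -> : t * (psi b - psi a) + psi a = t * psi b + (1 - t) * psi a by ring.
by apply: cvx; rewrite ?(ltW t0).
Qed.

Lemma convex_pos_derive_monotone (psi : R -> R) (a b : R) :
  convex_pos psi -> derivable psi a 1 -> derivable psi b 1 -> 0 < a -> 0 < b ->
  0 <= (derive1 psi b - derive1 psi a) * (b - a).
Proof.
move=> cvx da db a0 b0.
have tangent_a := convex_pos_tangent cvx da a0 b0.
have tangent_b := convex_pos_tangent cvx db b0 a0.
nra.
Qed.

Lemma separable_argmin_first_order (d : nat) (F : 'I_d -> R -> R) (DF : 'I_d -> R)
    (Omega : set ('I_d -> R)) (p q : 'I_d -> R) :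
  convex_set_d Omega -> is_argmin (fun u => \sum_(i < d) F i (u i)) Omega p ->
  Omega q -> (forall i, is_derive (p i) 1 (F i) (DF i)) ->
  0 <= \sum_(i < d) DF i * (q i - p i).
Proof.
move=> cvx [Op pmin] Oq dF.
apply: (@is_derive_ge0_at_right_min (\sum_(i < d) fun t => F i (t * (q i - p i) + p i))).
  by apply: is_derive_sum => i; exact: is_derive_comp_affine.
move=> t /andP[t0 t1]; rewrite !fct_sumE.
under eq_bigr do rewrite mul0r add0r.
apply: (pmin (fun i => t * (q i - p i) + p i)).
have -> : (fun i => t * (q i - p i) + p i) = (fun i => t * q i + (1 - t) * p i).
  by apply/funext => i; ring.
by apply: (cvx _ _ _ Oq Op); rewrite (ltW t0).
Qed.

Lemma is_derive_Fobj_coord (psi : R -> R) (l g c s : R) :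
  0 < s -> derivable psi s 1 ->
  is_derive s 1 (fun z => z * l + g * psi z - c * ln z) (l + g * derive1 psi s - c / s).
Proof.
move=> s0 ds.
have psiD : is_derive s 1 psi (derive1 psi s) by rewrite derive1E; exact: derivableP.
have lnD := is_derive1_ln s0.
have -> : (fun z => z * l + g * psi z - c * ln z) = l \*: id + g \*: psi - c \*: @ln R.
  by apply/funext => z /=; rewrite mulrC.
apply: is_derive_eq (is_deriveB (is_deriveD (is_deriveZ l (is_derive_id s 1))
  (is_deriveZ g psiD)) (is_deriveZ c lnD)) _.
by rewrite scaler1.
Qed.

Lemma FobjE (d : nat) (C : R) (gam L : 'I_d -> R) (psi : R -> R) :
  Fobj C gam L psi
  = fun p => \sum_(i < d) (p i * L i + gam i * psi (p i) - C * ln (p i)).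
Proof.
apply/funext => p.
by rewrite /Fobj /inner /phi_reg /phi_log mulr_sumr -sumrN -!big_split.
Qed.

Lemma Fobj_first_order (d : nat) (C : R) (gam L : 'I_d -> R) (psi : R -> R)
    (Omega : set ('I_d -> R)) (p q : 'I_d -> R) :
  (forall z, 0 < z -> derivable psi z 1) -> (forall u, Omega u -> forall i, 0 < u i) ->
  convex_set_d Omega -> is_argmin (Fobj C gam L psi) Omega p -> Omega q ->
  0 <= \sum_(i < d) (L i + gam i * derive1 psi (p i) - C / p i) * (q i - p i).
Proof.
move=> dpsi pos cvx pmin Oq; have p0 := pos _ pmin.1.
rewrite FobjE in pmin.
apply: (separable_argmin_first_order
  (DF := fun i => L i + gam i * derive1 psi (p i) - C / p i) cvx pmin Oq) => i.
exact: is_derive_Fobj_coord (p0 i) (dpsi _ (p0 i)).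
Qed.

Lemma argmin_pair_coupling (d : nat) (C : R) (gam gam' L L' : 'I_d -> R) (psi : R -> R)
    (Omega : set ('I_d -> R)) (x y : 'I_d -> R) :
  (forall i, 0 < gam' i) -> (forall z, 0 < z -> derivable psi z 1) -> convex_pos psi ->
  (forall u, Omega u -> forall i, 0 < u i) -> convex_set_d Omega ->
  is_argmin (Fobj C gam L psi) Omega x -> is_argmin (Fobj C gam' L' psi) Omega y ->
  C * \sum_(i < d) (y i - x i) ^+ 2 / (x i * y i)
  <= \sum_(i < d) ((L' i - L i) * x i + (gam' i - gam i) * derive1 psi (x i) * x i)
                  * ((x i - y i) / x i).
Proof.
move=> gam'0 dpsi psi_cvx pos cvx xmin ymin.
have x0 := pos _ xmin.1; have y0 := pos _ ymin.1.
rewrite -subr_ge0 mulr_sumr -sumrB.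
have := addr_ge0 (Fobj_first_order dpsi pos cvx xmin ymin.1)
                 (Fobj_first_order dpsi pos cvx ymin xmin.1).
move/le_trans; apply; rewrite -big_split; apply: ler_sum => i _.
apply: first_order_pair_le => //; first exact: ltW.
exact: convex_pos_derive_monotone psi_cvx (dpsi _ (x0 i)) (dpsi _ (y0 i)) (x0 i) (y0 i).
Qed.

End FirstOrderOptimality.

Theorem lemma29 (R : realType) (d : nat) (Clog : R)
  (gam gam' L L' : 'I_d -> R) (psi : R -> R) (Omega : set ('I_d -> R))
  (x y : 'I_d -> R) :
  0 < Clog ->
  (forall i, 0 < gam i) -> (forall i, 0 < gam' i) ->
  (forall i, gam i <= gam' i) ->
  (forall i, 0 < L i) -> (forall i, 0 < L' i) ->
  twice_diff_pos psi -> convex_pos psi ->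
  (forall a z : R, 0 < a -> a / 2 <= z <= 2 * a ->
     derive1 (derive1 psi) a / 4 <= derive1 (derive1 psi) z /\
     derive1 (derive1 psi) z <= 4 * derive1 (derive1 psi) a) ->
  (forall p, Omega p -> forall i, 0 < p i) ->
  convex_set_d Omega ->
  is_argmin (Fobj Clog gam L psi) Omega x ->
  is_argmin (Fobj Clog gam' L' psi) Omega y ->
  Num.max 9 (Num.max (32 * \sum_(i < d) (L' i - L i) ^+ 2 * x i ^+ 2)
                     (32 * \sum_(i < d) (gam' i - gam i) ^+ 2
                              * (derive1 psi (x i)) ^+ 2 * x i ^+ 2)) <= Clog ->
  forall i, x i / 2 <= y i <= 2 * x i.
Proof.
move=> _ _ gam'0 _ _ _ psi2 psi_cvx _ pos cvx xmin ymin.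
rewrite !ge_max => /andP[C9 /andP[CL Cgam]] j.
have dpsi z (z0 : 0 < z) : derivable psi z 1 := (psi2 z z0).1.
have x0 := pos _ xmin.1; have y0 := pos _ ymin.1.
pose t i := (y i - x i) ^+ 2 / (x i * y i).
have t0 i : 0 <= t i by rewrite divr_ge0 ?sqr_ge0 ?mulr_ge0 ?ltW.
have gap_small : \sum_i t i <= 1 / 4.
  apply: (gap_sum_le_quarter C9 t0 (fun i => rel_gap_sqr_le (x0 i) (y0 i)) _
    (argmin_pair_coupling gam'0 dpsi psi_cvx pos cvx xmin ymin)).
  apply: le_trans (sum_sqrD_le _ _) _.
  under eq_bigr do rewrite exprMn.
  under [X in _ + 2 * X]eq_bigr do rewrite !exprMn.
  lra.
apply: near_of_gap_le_quarter => //.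
exact: le_trans (ler_sum_term _ t0) gap_small.
Qed.
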